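(* Let $\Gamma_1,\Gamma_2$ be propositional theories such that no atom occurring in $\Gamma_1$ is a head atom of $\Gamma_2$, and let $S$ be a set of atoms containing all head atoms of $\Gamma_1$ and no head atoms of $\Gamma_2$. Then a set $X$ of atoms is a stable model of $\Gamma_1\cup\Gamma_2$ if and only if $X\cap S$ is a stable model of $\Gamma_1$ and $X$ is a stable model of the theory $(X\cap S)\cup\Gamma_2$ (where each atom of $X\cap S$ is regarded as a formula).
   Context: Formulas are built from atoms and $\bot$ using $\wedge,\vee,\to$; $\top$, $\neg F$, $F\leftrightarrow G$ abbreviate $\bot\to\bot$, $F\to\bot$, $(F\to G)\wedge(G\to F)$. Reduct: $\bot^X=\bot$; $a^X=a$ if $a\in X$, else $\bot$; $(F\otimes G)^X=F^X\otimes G^X$ if $X\models F\otimes G$, else $\bot$; $\Gamma^X=\{F^X:F\in\Gamma\}$. $X$ is a stable model of $\Gamma$ if $X\models\Gamma^X$ and no proper subset of $X$ satisfies $\Gamma^X$. An occurrence of an atom is strictly positive if it lies in the antecedent of no implication (abbreviations expanded); a head atom of a theory is an atom with a strictly positive occurrence in it. *)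

(* Propositional formulas over an arbitrary type of atoms,
   Ferraris-style reduct and stable models. *)
From Stdlib Require Import Classical ClassicalEpsilon.
Set Implicit Arguments.

Section Formulas.
Variable A : Type.

Inductive form : Type :=
| Bot : form
| Atom : A -> form
| And : form -> form -> form
| Or : form -> form -> form
| Imp : form -> form -> form.

Definition aset := A -> Prop.
Definition theory := form -> Prop.

Fixpoint sat (X : aset) (F : form) : Prop :=
  match F with
  | Bot => False
  | Atom a => X a
  | And F G => sat X F /\ sat X G
  | Or F G => sat X F \/ sat X G
  | Imp F G => sat X F -> sat X G
  end.

Definition sat_th (X : aset) (T : theory) : Prop := forall F, T F -> sat X F.

Fixpoint reduct (X : aset) (F : form) : form :=
  match F with
  | Bot => Bot
  | Atom a => if excluded_middle_informative (X a) then Atom a else Bot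
  | And F1 G1 => if excluded_middle_informative (sat X (And F1 G1))
                 then And (reduct X F1) (reduct X G1) else Bot
  | Or F1 G1 => if excluded_middle_informative (sat X (Or F1 G1))
                then Or (reduct X F1) (reduct X G1) else Bot
  | Imp F1 G1 => if excluded_middle_informative (sat X (Imp F1 G1))
                 then Imp (reduct X F1) (reduct X G1) else Bot
  end.

Definition reduct_th (X : aset) (T : theory) : theory :=
  fun G => exists F, T F /\ G = reduct X F.

Definition subset (X Y : aset) : Prop := forall a, X a -> Y a.
Definition proper_subset (Y X : aset) : Prop := subset Y X /\ ~ subset X Y.

Definition stable_model (X : aset) (T : theory) : Prop :=
  sat_th X (reduct_th X T) /\
  ~ (exists Y, proper_subset Y X /\ sat_th Y (reduct_th X T)).

Fixpoint occurs (a : A) (F : form) : Prop :=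
  match F with
  | Bot => False
  | Atom b => a = b
  | And F G | Or F G | Imp F G => occurs a F \/ occurs a G
  end.

Fixpoint strictly_pos (a : A) (F : form) : Prop :=
  match F with
  | Bot => False
  | Atom b => a = b
  | And F G | Or F G => strictly_pos a F \/ strictly_pos a G
  | Imp _ G => strictly_pos a G
  end.

Definition occurs_th (a : A) (T : theory) : Prop := exists F, T F /\ occurs a F.
Definition head_atom (a : A) (T : theory) : Prop := exists F, T F /\ strictly_pos a F.

Definition th_union (T1 T2 : theory) : theory := fun F => T1 F \/ T2 F.
Definition aset_inter (X Y : aset) : aset := fun a => X a /\ Y a.
Definition atoms_th (X : aset) : theory := fun F => exists a, X a /\ F = Atom a.

End Formulas.

From Stdlib Require Import Classical ClassicalEpsilon.

(* Three facts about the reduct do all the work: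
   - agreement: F^X and the truth of F^X in Y depend only on how X and Y
     treat the atoms occurring in F (sat_reduct_th_agree);
   - positivity: if X |= T, then any Y included in X that keeps every head
     atom of T belonging to X still satisfies T^X (sat_reduct_heads); hence
     every atom of a stable model is a head atom (stable_heads);
   - the reduct of a set Z of atoms (Z included in X) is Z itself, so Y
     satisfies it exactly when Z is included in Y (sat_reduct_atoms).
   In the setting of the theorem, a stable model X of G1 u G2 or of
   (X n S) u G2 agrees with X n S on the atoms of G1 (agree_G1_inter), since
   such atoms cannot be head atoms of G2.  Each direction of the equivalence
   then compares the reducts with respect to X and to X n S, and transports
   counter-examples to minimality between the two sides. *)

Section Reduct.
Set Implicit Arguments.
Variable A : Type.

Lemma sat_agree (F : form A) (X Y : aset A) :
  (forall a, occurs a F -> (X a <-> Y a)) -> (sat X F <-> sat Y F).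
Proof.
  revert X Y; induction F as [| b | F1 IH1 F2 IH2 | F1 IH1 F2 IH2 | F1 IH1 F2 IH2];
    intros X Y H; simpl in *; [tauto | exact (H b eq_refl) |..].
  all: rewrite (IH1 X Y), (IH2 X Y) by (intros; apply H; auto); tauto.
Qed.

Lemma reduct_agree (F : form A) (X X' : aset A) :
  (forall a, occurs a F -> (X a <-> X' a)) -> reduct X F = reduct X' F.
Proof.
  revert X X'; induction F as [| b | F1 IH1 F2 IH2 | F1 IH1 F2 IH2 | F1 IH1 F2 IH2];
    intros X X' H; [reflexivity | |..].
  { specialize (H b eq_refl); simpl.
    destruct (excluded_middle_informative (X b));
      destruct (excluded_middle_informative (X' b)); tauto || reflexivity. }
  all: pose proof (sat_agree _ X X' H) as Hsat; cbn [reduct];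
    rewrite (IH1 X X'), (IH2 X X') by (intros; apply H; simpl; auto);
    do 2 match goal with |- context [excluded_middle_informative ?P] =>
        destruct (excluded_middle_informative P) end;
    reflexivity || tauto.
Qed.

Lemma occurs_reduct (F : form A) (X : aset A) a :
  occurs a (reduct X F) -> occurs a F.
Proof.
  induction F; simpl; auto;
    match goal with |- context [excluded_middle_informative ?P] =>
      destruct (excluded_middle_informative P) end; simpl; tauto.
Qed.

(* A satisfiable reduct F^X witnesses X |= F (otherwise F^X is Bot). *)
Lemma sat_reduct (F : form A) (X Y : aset A) : sat Y (reduct X F) -> sat X F.
Proof.
  revert X Y; induction F; intros X Y; simpl; auto;
    match goal with |- context [excluded_middle_informative ?P] =>
      destruct (excluded_middle_informative P) end; simpl; firstorder.
Qed.

Lemma sat_reduct_pos (F : form A) (X Y : aset A) :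
  sat X F -> subset Y X -> (forall a, X a -> strictly_pos a F -> Y a) ->
  sat Y (reduct X F).
Proof.
  revert X Y; induction F as [| b | F1 IH1 F2 IH2 | F1 IH1 F2 IH2 | F1 IH1 F2 IH2];
    intros X Y HF HYX Hpos; simpl in *.
  - contradiction.
  - destruct (excluded_middle_informative (X b)); simpl; auto.
  - destruct (excluded_middle_informative (sat X F1 /\ sat X F2)); [|tauto].
    split; [apply IH1 | apply IH2]; try tauto; auto.
  - destruct (excluded_middle_informative (sat X F1 \/ sat X F2)); [|tauto].
    destruct HF; [left; apply IH1 | right; apply IH2]; auto.
  - destruct (excluded_middle_informative (sat X F1 -> sat X F2)); [|tauto].
    intro HY1; apply IH2; auto. apply HF; eapply sat_reduct; eauto.
Qed.

Definition agree (T : theory A) (X Y : aset A) : Prop :=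
  forall a, occurs_th a T -> (X a <-> Y a).

Lemma sat_reduct_th_agree (T : theory A) (X X' Y Y' : aset A) :
  agree T X X' -> agree T Y Y' ->
  (sat_th Y (reduct_th X T) <-> sat_th Y' (reduct_th X' T)).
Proof.
  intros HX HY.
  assert (Hred : forall F, T F ->
    (sat Y (reduct X F) <-> sat Y' (reduct X' F))).
  { intros F HF. rewrite (reduct_agree F X X')
      by (intros a ha; apply HX; exists F; auto).
    apply sat_agree; intros a ha; apply HY; exists F.
    split; [exact HF | eapply occurs_reduct; eauto]. }
  split; intros H G [F [HF ->]]; apply Hred; auto; apply H; exists F; auto.
Qed.

Lemma sat_reduct_union (T1 T2 : theory A) (X Y : aset A) :
  sat_th Y (reduct_th X (th_union T1 T2)) <->
  sat_th Y (reduct_th X T1) /\ sat_th Y (reduct_th X T2).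
Proof.
  split.
  - intros H; split; intros G [F [HF ->]]; apply H; exists F; split;
      [left | | right |]; auto.
  - intros [H1 H2] G [F [[HF | HF] ->]]; [apply H1 | apply H2]; exists F; auto.
Qed.

Lemma sat_reduct_atoms (Z X Y : aset A) :
  subset Z X -> (sat_th Y (reduct_th X (atoms_th Z)) <-> subset Z Y).
Proof.
  intros HZX.
  assert (Hatom : forall a, Z a -> reduct X (Atom a) = Atom a).
  { intros a ha; simpl.
    destruct (excluded_middle_informative (X a)) as [_ | hn];
      [reflexivity | contradiction (hn (HZX a ha))]. }
  split.
  - intros H a ha. apply (H (Atom a)).
    exists (Atom a); split; [exists a; auto | symmetry; apply Hatom; exact ha].
  - intros H G [F [[a [ha ->]] ->]]. rewrite Hatom; [apply H |]; exact ha.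
Qed.

Lemma head_atom_union (T1 T2 : theory A) a :
  head_atom a (th_union T1 T2) -> head_atom a T1 \/ head_atom a T2.
Proof. intros [F [[HF | HF] Hpos]]; [left | right]; exists F; auto. Qed.

Lemma head_atom_atoms (Z : aset A) a : head_atom a (atoms_th Z) -> Z a.
Proof. intros [F [[b [hb ->]] Hpos]]; simpl in Hpos; subst; exact hb. Qed.

Lemma sat_reduct_heads (T : theory A) (X Y : aset A) :
  sat_th X (reduct_th X T) -> subset Y X ->
  (forall a, X a -> head_atom a T -> Y a) -> sat_th Y (reduct_th X T).
Proof.
  intros HX HYX Hheads G [F [HF ->]]. apply sat_reduct_pos; auto.
  - eapply sat_reduct; apply HX; exists F; auto.
  - intros a ha hpos; apply Hheads; auto; exists F; auto.
Qed.

Lemma stable_modelP (T : theory A) (X : aset A) :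
  stable_model X T <->
  sat_th X (reduct_th X T) /\
  (forall Y, subset Y X -> sat_th Y (reduct_th X T) -> subset X Y).
Proof.
  unfold stable_model, proper_subset; split.
  - intros [HX Hmin]; split; auto. intros Y HYX HY.
    apply NNPP; intro hn; apply Hmin; exists Y; auto.
  - intros [HX Hmin]; split; auto. intros [Y [[HYX hn] HY]]; auto.
Qed.

Lemma stable_heads (T : theory A) (X : aset A) :
  stable_model X T -> forall a, X a -> head_atom a T.
Proof.
  intros [HX Hmin]%stable_modelP a ha.
  refine (proj2 (Hmin (fun b => X b /\ head_atom b T) _ _ a ha)).
  - intros b [hb _]; exact hb.
  - apply sat_reduct_heads; auto. intros b [hb _]; exact hb.
Qed.

End Reduct.

Section Splitting.
Set Implicit Arguments.
Variables (A : Type) (G1 G2 : theory A) (S : aset A).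
Hypothesis G1_not_heads_G2 : forall a, occurs_th a G1 -> ~ head_atom a G2.
Hypothesis heads_G1_in_S : forall a, head_atom a G1 -> S a.
Hypothesis heads_G2_out_S : forall a, head_atom a G2 -> ~ S a.

(* If X is stable for T u G2 and the head atoms of T lie in S, then the atoms
   of G1 true in X lie in S: they are head atoms of T, not of G2. *)
Lemma agree_G1_inter (T : theory A) (X : aset A) :
  stable_model X (th_union T G2) -> (forall a, head_atom a T -> S a) ->
  agree G1 X (aset_inter X S).
Proof.
  intros HX HT a ha; unfold aset_inter; split; [| tauto]. intros hx; split; auto.
  destruct (head_atom_union (stable_heads HX a hx)) as [hT | h2]; auto.
  contradiction (G1_not_heads_G2 ha h2).
Qed.

Lemma split_G1 (X : aset A) :
  stable_model X (th_union G1 G2) -> stable_model (aset_inter X S) G1.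
Proof.
  intros HX. pose proof (agree_G1_inter HX heads_G1_in_S) as Hagree.
  apply stable_modelP in HX as [[HX1 HX2]%sat_reduct_union Hmin].
  apply stable_modelP; split.
  - exact (proj1 (sat_reduct_th_agree Hagree Hagree) HX1).
  - intros Y HYZ HY.
    (* Y, completed by the atoms of X outside S, would refute minimality of X *)
    set (Y' := fun a => Y a \/ (X a /\ ~ S a)).
    assert (HY'X : subset Y' X) by (intros a [h | [h _]]; auto; apply (HYZ a h)).
    assert (HY'Y : agree G1 Y' Y).
    { intros a ha; split; [intros [h | [hx hs]] | intros h; left]; auto.
      contradiction (hs (proj2 (proj1 (Hagree a ha) hx))). }
    assert (HXY' : subset X Y').
    { apply Hmin; auto. apply sat_reduct_union; split.
      - exact (proj2 (sat_reduct_th_agree Hagree HY'Y) HY).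
      - apply sat_reduct_heads; auto.
        intros a hx h2; right; split; auto; apply heads_G2_out_S; exact h2. }
    intros a [hx hs]. destruct (HXY' a hx) as [h | [_ hn]]; tauto.
Qed.

(* Forward direction, second half: X is stable for (X n S) u G2, since any
   smaller model containing X n S also satisfies G1^X by positivity. *)
Lemma split_G2 (X : aset A) :
  stable_model X (th_union G1 G2) ->
  stable_model X (th_union (atoms_th (aset_inter X S)) G2).
Proof.
  intros [[HX1 HX2]%sat_reduct_union Hmin]%stable_modelP.
  assert (HZX : subset (aset_inter X S) X) by (intros a [h _]; exact h).
  apply stable_modelP; split.
  - apply sat_reduct_union; split; auto. apply sat_reduct_atoms; auto.
  - intros Y HYX [HZY HY2]%sat_reduct_union.
    apply sat_reduct_atoms in HZY; auto.
    apply Hmin; auto. apply sat_reduct_union; split; auto.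
    apply sat_reduct_heads; auto.
    intros a hx h1; apply HZY; split; auto.
Qed.

Lemma join_G1_G2 (X : aset A) :
  stable_model (aset_inter X S) G1 ->
  stable_model X (th_union (atoms_th (aset_inter X S)) G2) ->
  stable_model X (th_union G1 G2).
Proof.
  intros HZ HX.
  assert (Hagree : agree G1 X (aset_inter X S)).
  { apply (agree_G1_inter HX). intros a ha; apply (head_atom_atoms ha). }
  apply stable_modelP in HZ as [HZ1 HZmin].
  apply stable_modelP in HX as [[HXZ HX2]%sat_reduct_union HXmin].
  apply stable_modelP; split.
  - apply sat_reduct_union; split; auto.
    exact (proj2 (sat_reduct_th_agree Hagree Hagree) HZ1).
  - intros Y HYX [HY1 HY2]%sat_reduct_union.
    (* first Y contains X n S, by minimality of X n S for G1 *)
    assert (HYS : agree G1 Y (aset_inter Y S)).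
    { intros a ha; unfold aset_inter; split; [| tauto]. intros hy; split; auto.
      exact (proj2 (proj1 (Hagree a ha) (HYX a hy))). }
    assert (HZY : subset (aset_inter X S) Y).
    { intros a ha. refine (proj1 (HZmin (aset_inter Y S) _ _ a ha)).
      - intros b [hy hs]; split; auto.
      - exact (proj1 (sat_reduct_th_agree Hagree HYS) HY1). }
    (* then minimality of X for (X n S) u G2 applies *)
    apply HXmin; auto. apply sat_reduct_union; split; auto.
    apply sat_reduct_atoms; auto. intros a [h _]; exact h.
Qed.

End Splitting.

Theorem proposition10 (A : Type) (G1 G2 : theory A) (S : aset A) :
  (forall a, occurs_th a G1 -> ~ head_atom a G2) ->
  (forall a, head_atom a G1 -> S a) ->
  (forall a, head_atom a G2 -> ~ S a) ->
  forall X : aset A,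
    stable_model X (th_union G1 G2) <->
    (stable_model (aset_inter X S) G1 /\
     stable_model X (th_union (atoms_th (aset_inter X S)) G2)).
Proof.
  intros HG1G2 HS1 HS2 X; split.
  - intros HX; split.
    + exact (split_G1 S HG1G2 HS1 HS2 HX).
    + exact (split_G2 S HS1 HX).
  - intros [HZ HX]; exact (join_G1_G2 HG1G2 HZ HX).
Qed.
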